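(* Let $n\ge 3$, $q=\frac{2n}{n-2}$, $\kappa=\frac{n-1}{n}$. Identify $S^1$ with $[-\pi,\pi]$ with endpoints identified, and let $\lambda=-1$ on $(-\pi,0)$, $\lambda=1$ on $(0,\pi)$. Let $N$ be a smooth positive function on $S^1$, $\gamma_N=-\frac{\int_{S^1}\lambda N}{\int_{S^1}N}$, and $t,\eta,\mu\in\mathbb{R}$ with $|t|\neq1$. For $d>0$ let $\psi_d$ and $\hat\psi_d$ be the unique positive solutions in $W^{2,\infty}(S^1)$ of, respectively, $$-2\kappa q\,d^{-2q/n}\psi_d''-2\eta^2d^{-2q}\psi_d^{-q-1}-\kappa(\mu d^{-q}+\gamma_N+\lambda)^2\psi_d^{-q-1}+\kappa(t+\lambda)^2\psi_d^{q-1}=0,$$ $$-2\kappa q\,d^{-2q/n}\hat\psi_d''-\kappa(\gamma_N+\lambda)^2\hat\psi_d^{-q-1}+\kappa(t+\lambda)^2\hat\psi_d^{q-1}=0.$$ Then there exists a constant $c>0$ such that $\|\hat\psi_d-\psi_d\|_{L^\infty(S^1)}<c\,d^{-q}$ for all sufficiently large $d$. In particular $\lim_{d\to\infty}\psi_d(0)=\lim_{d\to\infty}\hat\psi_d(0)$. *)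

From Stdlib Require Import Reals.
From Coquelicot Require Import Coquelicot.
Open Scope R_scope.

(* S^1 = [-pi,pi] with endpoints identified: functions on S^1 are
   2*pi-periodic functions R -> R. *)
Definition periodic2pi (f : R -> R) : Prop := forall x, f (x + 2 * PI) = f x.

(* Representative of x in [-pi, pi). *)
Definition circ_rep (x : R) : R := x - 2 * PI * IZR (Int_part ((x + PI) / (2 * PI))).

(* lambda = -1 on (-pi,0), 1 on (0,pi); value 0 at the two jump points 0, pi
   (irrelevant: only used a.e. / in integrals). *)
Definition lam (x : R) : R :=
  let y := circ_rep x in
  if Rlt_dec y 0 then -1 else if Rlt_dec 0 y then 1 else 0.

Definition smooth (f : R -> R) : Prop := forall (k : nat) (x : R), ex_derive_n f k x.

Definition gammaN (N : R -> R) : R :=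
  - (RInt (fun x => lam x * N x) (-PI) PI) / RInt N (-PI) PI.

Definition jump_pt (x : R) : Prop := exists k : Z, x = IZR k * PI.

(* Since the coefficients are
   continuous away from the jump points of lambda, a W^{2,oo} solution is
   exactly a C^1 periodic function, C^2 away from the jump points, satisfying
   the equation there. *)
Definition W2inf_pos_solution (a : R) (F : R -> R -> R) (psi : R -> R) : Prop :=
  periodic2pi psi /\ (forall x, 0 < psi x) /\
  exists dpsi : R -> R,
    (forall x, is_derive psi x (dpsi x)) /\
    (forall x, ~ jump_pt x ->
       exists d2, is_derive dpsi x d2 /\ a * d2 = F x (psi x)).

From Stdlib Require Import Reals Lra ZArith Lia.
From Coquelicot Require Import Coquelicot.
Open Scope R_scope.

(* A maximum principle holds for  a psi'' = - X(lam) psi^(-q-1) + B(lam) psi^(q-1)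
   although lam jumps, since lam is constant just to the right of every point.
   At a maximum of a solution it gives B psi^(2q) <= X, hence a uniform bound
   psi <= max(1, K / Bmin); at a maximum of psi1 - psi2 > 0 it gives
   X2 (psi1 - psi2) <= (X1 - X2) psi2.  The two equations of the theorem differ
   only by O(d^-q) in the coefficient of psi^(-q-1), which stays bounded below
   because |gammaN N| < 1 and lam = +-1; hence |psihat_d - psi_d| = O(d^-q), and
   the limits at 0 coincide because d^-q -> 0. *)

Lemma Int_part_eq (z : Z) (r : R) : IZR z <= r < IZR z + 1 -> Int_part r = z.
Proof.
  intros [H1 H2]. destruct (base_Int_part r) as [H3 H4].
  assert (A : (Int_part r < z + 1)%Z) by (apply lt_IZR; rewrite plus_IZR; simpl; lra).
  assert (B : (z < Int_part r + 1)%Z) by (apply lt_IZR; rewrite plus_IZR; simpl; lra).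
  lia.
Qed.

Lemma lam_between_multiples_PI (m : Z) (x : R) :
  IZR m * PI < x < (IZR m + 1) * PI ->
  lam x = (if Z.even m then 1 else -1) /\ ~ jump_pt x.
Proof.
  intros [H1 H2]. pose proof PI_RGT_0 as HP. split.
  - unfold lam, circ_rep.
    destruct (Z.even m) eqn:E.
    + apply Zeven_bool_iff, Zeven_ex in E as [j ->].
      rewrite mult_IZR in *.
      rewrite (Int_part_eq j).
      2:{ split.
          - apply (Rmult_le_reg_r (2*PI)); [lra|]. field_simplify; [nra | lra].
          - apply (Rmult_lt_reg_r (2*PI)); [lra|]. field_simplify; [nra | lra]. }
      destruct (Rlt_dec (x - 2 * PI * IZR j) 0); [nra|].
      destruct (Rlt_dec 0 (x - 2 * PI * IZR j)); [reflexivity | nra].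
    + assert (E' : Z.odd m = true) by (rewrite <- Z.negb_even, E; reflexivity).
      apply Zodd_bool_iff, Zodd_ex in E' as [j ->].
      rewrite plus_IZR, mult_IZR in *.
      rewrite (Int_part_eq (j+1)).
      2:{ rewrite plus_IZR. split.
          - apply (Rmult_le_reg_r (2*PI)); [lra|]. field_simplify; [nra | lra].
          - apply (Rmult_lt_reg_r (2*PI)); [lra|]. field_simplify; [nra | lra]. }
      rewrite plus_IZR.
      destruct (Rlt_dec (x - 2 * PI * (IZR j + 1)) 0); [reflexivity | nra].
  - intros [k ->].
    assert (A : (m < k)%Z) by (apply lt_IZR; nra).
    assert (B : (k < m + 1)%Z) by (apply lt_IZR; rewrite plus_IZR; nra).
    lia.
Qed.

Lemma lam_locally_constant_right (x0 : R) : exists l eps, (l = 1 \/ l = -1) /\ 0 < eps /\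
  forall x, x0 < x < x0 + eps -> lam x = l /\ ~ jump_pt x.
Proof.
  pose proof PI_RGT_0 as HP.
  set (m := Int_part (x0 / PI)).
  destruct (base_Int_part (x0 / PI)) as [H1 H2]. fold m in H1, H2.
  assert (A : IZR m * PI <= x0).
  { apply (Rmult_le_compat_r PI) in H1; [|lra]. field_simplify in H1; lra. }
  assert (B : x0 < (IZR m + 1) * PI).
  { assert (x0 / PI < IZR m + 1) by lra.
    apply (Rmult_lt_compat_r PI) in H; [|lra]. field_simplify in H; lra. }
  exists (if Z.even m then 1 else -1), ((IZR m + 1) * PI - x0).
  split; [destruct (Z.even m); auto|]. split; [lra|].
  intros x Hx. apply lam_between_multiples_PI. lra.
Qed.

Lemma lam_neg (x : R) : -PI < x < 0 -> lam x = -1.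
Proof.
  intros Hx. apply (lam_between_multiples_PI (-1)). simpl. lra.
Qed.

Lemma lam_pos (x : R) : 0 < x < PI -> lam x = 1.
Proof.
  intros Hx. apply (lam_between_multiples_PI 0). simpl. lra.
Qed.

Lemma gammaN_bounds (N : R -> R) : (forall x, continuous N x) -> (forall x, 0 < N x) ->
  -1 < gammaN N < 1.
Proof.
  intros Hc Hp. pose proof PI_RGT_0 as HP.
  assert (Ex : forall a b, ex_RInt N a b)
    by (intros; apply (@ex_RInt_continuous R_CompleteNormedModule); auto).
  set (I1 := RInt N (-PI) 0). set (I2 := RInt N 0 PI).
  assert (P1 : 0 < I1) by (apply RInt_gt_0; auto; lra).
  assert (P2 : 0 < I2) by (apply RInt_gt_0; auto; lra).
  assert (L1 : forall x, Rmin (-PI) 0 < x < Rmax (-PI) 0 -> lam x * N x = - N x).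
  { intros x. rewrite Rmin_left, Rmax_right by lra. intros Hx. rewrite lam_neg; [ring | lra]. }
  assert (L2 : forall x, Rmin 0 PI < x < Rmax 0 PI -> lam x * N x = N x).
  { intros x. rewrite Rmin_left, Rmax_right by lra. intros Hx. rewrite lam_pos; [ring | lra]. }
  assert (J : RInt (fun x => lam x * N x) (-PI) PI = I2 - I1).
  { rewrite <- (RInt_Chasles (V:=R_CompleteNormedModule) _ (-PI) 0 PI).
    - rewrite (RInt_ext _ _ _ _ L1), (RInt_ext _ _ _ _ L2), (RInt_opp (V:=R_CompleteNormedModule)) by apply Ex.
      change (- I1 + I2 = I2 - I1). ring.
    - apply (ex_RInt_ext _ _ _ _ (fun x Hx => eq_sym (L1 x Hx))).
      apply (ex_RInt_opp (V:=R_NormedModule)). apply Ex.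
    - apply (ex_RInt_ext _ _ _ _ (fun x Hx => eq_sym (L2 x Hx))). apply Ex. }
  assert (K : RInt N (-PI) PI = I1 + I2)
    by (rewrite <- (RInt_Chasles (V:=R_CompleteNormedModule) N (-PI) 0 PI) by apply Ex; reflexivity).
  unfold gammaN. rewrite J, K. split.
  - apply Rminus_lt_0. replace (- (I2 - I1) / (I1 + I2) - -1) with (2 * I1 / (I1 + I2)) by (field; lra).
    apply Rdiv_lt_0_compat; lra.
  - apply Rminus_lt_0. replace (1 - - (I2 - I1) / (I1 + I2)) with (2 * I2 / (I1 + I2)) by (field; lra).
    apply Rdiv_lt_0_compat; lra.
Qed.

Lemma periodic2pi_shift_nat (f : R -> R) : periodic2pi f ->
  forall (k : nat) x, f (x + 2 * PI * INR k) = f x.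
Proof.
  intros Hp k. induction k as [|k IH]; intros x.
  - simpl. f_equal. ring.
  - rewrite S_INR. replace (x + 2 * PI * (INR k + 1)) with ((x + 2 * PI * INR k) + 2 * PI) by ring.
    rewrite Hp. apply IH.
Qed.

Lemma periodic2pi_shift (f : R -> R) : periodic2pi f ->
  forall (k : Z) x, f (x + 2 * PI * IZR k) = f x.
Proof.
  intros Hp k x. destruct k as [|p|p].
  - simpl. f_equal. ring.
  - rewrite <- (positive_nat_Z p), <- INR_IZR_INZ. apply periodic2pi_shift_nat; auto.
  - rewrite IZR_NEG, <- (positive_nat_Z p), <- INR_IZR_INZ.
    rewrite <- (periodic2pi_shift_nat f Hp (Pos.to_nat p) (x + 2 * PI * - INR (Pos.to_nat p))).
    f_equal. ring.
Qed.

Lemma periodic2pi_has_max (f : R -> R) : periodic2pi f -> (forall x, continuous f x) ->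
  exists x0, forall y, f y <= f x0.
Proof.
  intros Hp Hc. pose proof PI_RGT_0 as HP.
  destruct (continuous_ab_maj_consistent f (-PI) PI) as [x0 [Hx0 _]]; [lra | intros; apply Hc |].
  exists x0. intros y.
  set (k := Int_part ((y + PI) / (2 * PI))).
  destruct (base_Int_part ((y + PI) / (2 * PI))) as [H1 H2]. fold k in H1, H2.
  replace (f y) with (f (y - 2 * PI * IZR k))
    by (rewrite <- (periodic2pi_shift f Hp k); f_equal; ring).
  apply Hx0. split.
  - apply (Rmult_le_compat_r (2*PI)) in H1; [|lra]. field_simplify in H1; lra.
  - assert ((y + PI) / (2 * PI) < IZR k + 1) by lra.
    apply (Rmult_lt_compat_r (2*PI)) in H; [|lra]. field_simplify in H; lra.
Qed.

Lemma is_derive_max_eq0 (f : R -> R) (x0 l : R) :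
  is_derive f x0 l -> (forall y, f y <= f x0) -> l = 0.
Proof.
  intros Hd Hmax.
  exact (deriv_maximum f (x0 - 1) (x0 + 1) x0 (exist _ l (proj1 (is_derive_Reals _ _ _) Hd))
           ltac:(lra) ltac:(lra) (fun y _ _ => Hmax y)).
Qed.

Lemma derive_lt_right_of_convex (f df g : R -> R) (x0 eps : R) :
  (forall x, is_derive f x (df x)) ->
  (forall x, x0 < x < x0 + eps -> is_derive df x (g x) /\ 0 < g x) ->
  forall y, x0 < y < x0 + eps -> df x0 < df y.
Proof.
  intros Hf Hdf y Hy.
  assert (Hinc : forall y1 y2, x0 < y1 < y2 -> y2 < x0 + eps -> df y1 < df y2).
  { intros y1 y2 H12 H2.
    destruct (MVT_cor2 df g y1 y2 ltac:(lra)) as [c [Hc1 Hc2]].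
    - intros c Hc. apply is_derive_Reals, Hdf. lra.
    - pose proof (proj2 (Hdf c ltac:(lra))). nra. }
  set (y' := (x0 + y) / 2).
  apply Rle_lt_trans with (df y'); [| apply Hinc; unfold y'; lra].
  apply Rnot_lt_le. intros Hlt.
  destruct (proj1 (is_derive_Reals _ _ _) (Hf x0) (df x0 - df y') ltac:(lra)) as [del Hdel].
  pose proof (cond_pos del) as Hdel0.
  set (h := Rmin del (y' - x0) / 2).
  assert (Hh : 0 < h /\ h < del /\ h < y' - x0).
  { unfold h. pose proof (Rmin_l del (y' - x0)). pose proof (Rmin_r del (y' - x0)).
    assert (0 < Rmin del (y' - x0)) by (apply Rmin_glb_lt; unfold y'; lra). lra. }
  destruct (MVT_cor2 f df x0 (x0 + h) ltac:(lra)) as [c [Hc1 Hc2]].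
  { intros c _. apply is_derive_Reals, Hf. }
  assert (df c < df y') by (apply Hinc; unfold y' in *; lra).
  specialize (Hdel h ltac:(lra) ltac:(rewrite Rabs_right; lra)).
  replace ((f (x0 + h) - f x0) / h) with (df c) in Hdel by (rewrite Hc1; field; lra).
  apply Rabs_def2 in Hdel. lra.
Qed.

Lemma no_max_left_of_convex (f df g : R -> R) (x0 eps : R) :
  0 < eps -> (forall x, is_derive f x (df x)) ->
  (forall x, x0 < x < x0 + eps -> is_derive df x (g x) /\ 0 < g x) ->
  ~ (forall y, f y <= f x0).
Proof.
  intros He Hf Hdf Hmax.
  pose proof (is_derive_max_eq0 f x0 (df x0) (Hf x0) Hmax) as Hd0.
  destruct (MVT_cor2 f df x0 (x0 + eps / 2) ltac:(lra)) as [c [Hc1 Hc2]].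
  { intros c _. apply is_derive_Reals, Hf. }
  pose proof (derive_lt_right_of_convex f df g x0 eps Hf Hdf c ltac:(lra)).
  specialize (Hmax (x0 + eps / 2)). nra.
Qed.

(* [x0] may be a jump point: the equation is used just to its right, where [lam]
   is constant. *)
Lemma max_principle (f df : R -> R) (a : R) (Phi : R -> R -> R) (x0 : R) :
  0 < a -> (forall x, is_derive f x (df x)) ->
  (forall x, ~ jump_pt x -> exists d2, is_derive df x d2 /\ a * d2 = Phi (lam x) x) ->
  (forall l, continuous (Phi l) x0) ->
  (forall y, f y <= f x0) ->
  exists l, (l = 1 \/ l = -1) /\ Phi l x0 <= 0.
Proof.
  intros Ha Hf Hdf Hc Hmax.
  destruct (lam_locally_constant_right x0) as [l [e1 [Hl [He1 Hlam]]]].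
  exists l. split; [exact Hl|].
  apply Rnot_lt_le. intros Hpos.
  destruct (proj2 (continuity_pt_filterlim _ _) (Hc l) (Phi l x0) Hpos) as [del [Hdel Hd]].
  apply (no_max_left_of_convex f df (fun x => Phi l x / a) x0 (Rmin e1 del)); auto.
  - apply Rmin_glb_lt; auto.
  - intros x Hx. pose proof (Rmin_l e1 del). pose proof (Rmin_r e1 del).
    destruct (Hlam x ltac:(lra)) as [Hlx Hj].
    destruct (Hdf x Hj) as [d2 [Hd2 Ha2]]. rewrite Hlx in Ha2.
    replace (Phi l x / a) with d2 by (rewrite <- Ha2; unfold Rdiv; rewrite Rinv_r_simpl_m; lra).
    split; [exact Hd2|].
    assert (Hx2 : dist R_met x x0 < del) by (simpl; unfold R_dist; rewrite Rabs_right; lra).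
    assert (Hne : x0 <> x) by lra.
    specialize (Hd x (conj (conj I Hne) Hx2)). simpl in Hd. unfold R_dist in Hd.
    apply Rabs_def2 in Hd. apply (Rmult_lt_reg_l a); [lra|]. rewrite Ha2. lra.
Qed.

Definition lich_rhs (X B q p : R) : R := - X * Rpower p (- q - 1) + B * Rpower p (q - 1).

Lemma Rpower_pos (x y : R) : 0 < Rpower x y.
Proof. apply exp_pos. Qed.

Lemma Rpower_opp_succ (u q : R) : 0 < u -> Rpower u (- q - 1) = / (u * Rpower u q).
Proof.
  intros Hu. replace (- q - 1) with (- (q + 1)) by ring.
  rewrite Rpower_Ropp, Rpower_plus, Rpower_1 by exact Hu. f_equal. ring.
Qed.

Lemma lich_rhs_nonpos_le (X B q u : R) : 0 < u -> 0 < B -> 1 < q ->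
  lich_rhs X B q u <= 0 -> u <= Rmax 1 (X / B).
Proof.
  intros Hu HB Hq H.
  destruct (Rle_dec u 1) as [h|h]; [apply Rle_trans with 1; [exact h | apply Rmax_l]|].
  apply Rle_trans with (X / B); [| apply Rmax_r].
  pose proof (Rpower_pos u q) as Pq.
  assert (Hmul : B * (Rpower u (q - 1) * (u * Rpower u q)) <= X).
  { unfold lich_rhs in H. rewrite Rpower_opp_succ in H by exact Hu.
    apply (Rmult_le_compat_r (u * Rpower u q)) in H; [|nra].
    rewrite Rmult_plus_distr_r in H.
    replace (- X * / (u * Rpower u q) * (u * Rpower u q)) with (- X) in H by (field; nra).
    lra. }
  assert (Hge1 : forall e, 0 <= e -> 1 <= Rpower u e).
  { intros e He. rewrite <- (Rpower_O u) by exact Hu. apply Rle_Rpower; lra. }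
  pose proof (Hge1 (q - 1) ltac:(lra)). pose proof (Hge1 q ltac:(lra)).
  apply Rmult_le_reg_l with B; [exact HB|].
  replace (B * (X / B)) with X by (field; lra).
  apply Rle_trans with (2 := Hmul). apply Rmult_le_compat_l; [lra|].
  assert (1 <= Rpower u (q - 1) * Rpower u q) by nra. nra.
Qed.

Lemma lich_rhs_sub_nonpos (X Y B q u v : R) : 0 < v <= u -> 0 <= Y -> 0 <= B -> 1 < q ->
  lich_rhs X B q u - lich_rhs Y B q v <= 0 -> Y * u <= X * v.
Proof.
  intros [Hv Hvu] HY HB Hq H.
  pose proof (Rpower_pos u q) as Pu. pose proof (Rpower_pos v q) as Pv.
  assert (Hq1 : Rpower v (q - 1) <= Rpower u (q - 1)) by (apply Rle_Rpower_l; lra).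
  assert (Hqq : Rpower v q <= Rpower u q) by (apply Rle_Rpower_l; lra).
  assert (Hinv : Y * / (v * Rpower v q) <= X * / (u * Rpower u q)).
  { assert (0 <= B * (Rpower u (q - 1) - Rpower v (q - 1))) by (apply Rmult_le_pos; lra).
    unfold lich_rhs in H. rewrite !Rpower_opp_succ in H by lra. lra. }
  assert (Hcross : Y * (u * Rpower u q) <= X * (v * Rpower v q)).
  { apply (Rmult_le_compat_r ((u * Rpower u q) * (v * Rpower v q))) in Hinv;
      [| left; repeat apply Rmult_lt_0_compat; lra].
    replace (Y * / (v * Rpower v q) * (u * Rpower u q * (v * Rpower v q)))
      with (Y * (u * Rpower u q)) in Hinv by (field; nra).
    replace (X * / (u * Rpower u q) * (u * Rpower u q * (v * Rpower v q)))
      with (X * (v * Rpower v q)) in Hinv by (field; nra).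
    exact Hinv. }
  assert (Y * u * Rpower v q <= Y * u * Rpower u q) by (apply Rmult_le_compat_l; nra).
  apply Rmult_le_reg_r with (Rpower v q); [exact Pv|]. lra.
Qed.

Definition lich_solution (a q : R) (X B : R -> R) : (R -> R) -> Prop :=
  W2inf_pos_solution a (fun x p => lich_rhs (X (lam x)) (B (lam x)) q p).

Lemma continuous_lich_rhs (X B q : R) (p : R -> R) (x : R) : ex_derive p x -> 0 < p x ->
  continuous (fun y => lich_rhs X B q (p y)) x.
Proof.
  intros. apply (@ex_derive_continuous R_AbsRing R_NormedModule).
  unfold lich_rhs, Rpower. auto_derive. repeat split; auto.
Qed.

Lemma lich_solution_le (a q : R) (X B : R -> R) (psi : R -> R) (K Bmin : R) :
  0 < a -> 1 < q -> lich_solution a q X B psi -> 0 < Bmin -> 0 <= K ->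
  (forall l, l = 1 \/ l = -1 -> Bmin <= B l /\ X l <= K) ->
  forall x, psi x <= Rmax 1 (K / Bmin).
Proof.
  intros Ha Hq [Hper [Hpos [dpsi [Hd Hd2]]]] HBm HK Hl.
  assert (Hc : forall x, continuous psi x)
    by (intros; apply (@ex_derive_continuous R_AbsRing R_NormedModule); eexists; apply Hd).
  destruct (periodic2pi_has_max psi Hper Hc) as [x0 Hx0].
  destruct (max_principle psi dpsi a (fun l y => lich_rhs (X l) (B l) q (psi y)) x0 Ha Hd Hd2)
    as [l [Hl1 Hl2]]; [intros l; apply continuous_lich_rhs; [eexists; apply Hd | apply Hpos] | exact Hx0 |].
  destruct (Hl l Hl1) as [HB HX].
  intros x. apply Rle_trans with (1 := Hx0 x).
  apply Rle_trans with (1 := lich_rhs_nonpos_le (X l) (B l) q (psi x0) (Hpos x0) ltac:(lra) Hq Hl2).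
  apply Rle_max_compat_l. unfold Rdiv.
  apply Rle_trans with (K * / B l).
  - apply Rmult_le_compat_r; [left; apply Rinv_0_lt_compat; lra | exact HX].
  - apply Rmult_le_compat_l; [exact HK | apply Rinv_le_contravar; auto].
Qed.

(* At a maximum of [p1 - p2] with [p1 > p2], comparing the two equations gives
   [X2 (p1 - p2) <= (X1 - X2) p2]. *)
Lemma lich_solution_sub_le (a q : R) (X1 X2 B : R -> R) (p1 p2 : R -> R) (Ymin E M : R) :
  0 < a -> 1 < q -> lich_solution a q X1 B p1 -> lich_solution a q X2 B p2 ->
  0 < Ymin -> 0 <= E -> (forall x, p2 x <= M) ->
  (forall l, l = 1 \/ l = -1 -> 0 <= B l /\ Ymin <= X2 l /\ X1 l - X2 l <= E) ->
  forall x, p1 x - p2 x <= M * E / Ymin.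
Proof.
  intros Ha Hq [Hper1 [Hpos1 [dp1 [Hd1 He1]]]] [Hper2 [Hpos2 [dp2 [Hd2 He2]]]] HY HE HM Hl.
  assert (HM0 : 0 <= M) by (specialize (HM 0); specialize (Hpos2 0); lra).
  set (w := fun y => p1 y - p2 y).
  assert (Hwd : forall y, is_derive w y (dp1 y - dp2 y))
    by (intros; apply (@is_derive_minus R_AbsRing R_NormedModule); auto).
  assert (Hwp : periodic2pi w) by (intros y; unfold w; rewrite Hper1, Hper2; reflexivity).
  assert (Hc : forall x, continuous w x)
    by (intros; apply (@ex_derive_continuous R_AbsRing R_NormedModule); eexists; apply Hwd).
  destruct (periodic2pi_has_max w Hwp Hc) as [x0 Hx0].
  intros x. change (w x <= M * E / Ymin). apply Rle_trans with (1 := Hx0 x).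
  destruct (Rle_dec (w x0) 0) as [h|h].
  { apply Rle_trans with 0; [exact h|]. apply Rmult_le_pos; [nra | left; apply Rinv_0_lt_compat, HY]. }
  destruct (max_principle w (fun y => dp1 y - dp2 y) a
     (fun l y => lich_rhs (X1 l) (B l) q (p1 y) - lich_rhs (X2 l) (B l) q (p2 y)) x0 Ha Hwd)
    as [l [Hl1 Hl2]].
  { intros y Hj. destruct (He1 y Hj) as [d1 [Hd1' Ha1]]. destruct (He2 y Hj) as [d2 [Hd2' Ha2]].
    exists (d1 - d2). split; [apply (@is_derive_minus R_AbsRing R_NormedModule); auto|].
    rewrite <- Ha1, <- Ha2. change (a * (d1 - d2) = a * d1 - a * d2). ring. }
  { intros l. apply (@continuous_minus R_UniformSpace R_AbsRing R_NormedModule);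
      apply continuous_lich_rhs; auto; eexists; auto. }
  { exact Hx0. }
  destruct (Hl l Hl1) as [HB [HX2 HX]].
  unfold w in h |- *.
  pose proof (lich_rhs_sub_nonpos (X1 l) (X2 l) (B l) q (p1 x0) (p2 x0)
                ltac:(split; [apply Hpos2 | lra]) ltac:(lra) HB Hq Hl2) as Hcomp.
  assert (H3 : X2 l * (p1 x0 - p2 x0) <= E * M) by (specialize (HM x0); specialize (Hpos2 x0); nra).
  apply Rmult_le_reg_l with Ymin; [exact HY|].
  replace (Ymin * (M * E / Ymin)) with (E * M) by (field; lra). nra.
Qed.

Lemma lich_solutions_close (a q : R) (X1 X2 B : R -> R) (p1 p2 : R -> R) (Ymin K Bmin E : R) :
  0 < a -> 1 < q -> lich_solution a q X1 B p1 -> lich_solution a q X2 B p2 ->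
  0 < Ymin -> 0 < Bmin -> 0 <= E ->
  (forall l, l = 1 \/ l = -1 ->
     Bmin <= B l /\ Ymin <= X1 l <= K /\ Ymin <= X2 l <= K /\ Rabs (X1 l - X2 l) <= E) ->
  forall x, Rabs (p1 x - p2 x) <= Rmax 1 (K / Bmin) * E / Ymin.
Proof.
  intros Ha Hq H1 H2 HY HBm HE Hl.
  assert (HK : 0 <= K) by (destruct (Hl 1 (or_introl eq_refl)) as [_ [? _]]; lra).
  assert (Hb : forall X p, lich_solution a q X B p -> (forall l, l = 1 \/ l = -1 -> X l <= K) ->
                 forall x, p x <= Rmax 1 (K / Bmin)).
  { intros X p Hp HX. apply (lich_solution_le a q X B p K Bmin); auto.
    intros l Hl1. split; [apply (Hl l Hl1) | exact (HX l Hl1)]. }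
  intros x. apply Rabs_le. split.
  - enough (p2 x - p1 x <= Rmax 1 (K / Bmin) * E / Ymin) by lra.
    apply (lich_solution_sub_le a q X2 X1 B p2 p1); auto.
    + apply Hb with X1; [exact H1 | apply Hl].
    + intros l Hl1. destruct (Hl l Hl1) as [? [? [? HD]]].
      rewrite Rabs_minus_sym in HD. apply Rabs_le_between in HD. repeat split; lra.
  - apply (lich_solution_sub_le a q X1 X2 B p1 p2); auto.
    + apply Hb with X2; [exact H2 | apply Hl].
    + intros l Hl1. destruct (Hl l Hl1) as [? [? [? HD]]].
      apply Rabs_le_between in HD. repeat split; lra.
Qed.

Lemma Rpower_opp_le_inv (d q : R) : 1 <= d -> 1 <= q -> Rpower d (- q) <= / d.
Proof.
  intros. rewrite <- (Rpower_1 d) at 2 by lra. rewrite <- Rpower_Ropp.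
  apply Rle_Rpower; lra.
Qed.

Lemma Rmin_sqr_shift_le (g l : R) : l = 1 \/ l = -1 ->
  Rmin ((g + 1) ^ 2) ((g - 1) ^ 2) <= (g + l) ^ 2.
Proof.
  intros [-> | ->]; [apply Rmin_l |].
  replace (g + -1) with (g - 1) by ring. apply Rmin_r.
Qed.

Lemma coef_perturbation_le (kappa eta mu s D : R) :
  0 <= kappa -> -2 <= s <= 2 -> 0 <= D <= 1 ->
  Rabs (2 * eta ^ 2 * (D * D) + kappa * (mu * D + s) ^ 2 - kappa * s ^ 2)
    <= (2 * eta ^ 2 + kappa * (4 * Rabs mu + mu ^ 2)) * D.
Proof.
  intros Hk Hs HD.
  replace (2 * eta ^ 2 * (D * D) + kappa * (mu * D + s) ^ 2 - kappa * s ^ 2)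
    with (D * (2 * eta ^ 2 * D + kappa * (2 * (mu * s) + mu ^ 2 * D))) by ring.
  rewrite Rabs_mult, Rabs_right, Rmult_comm by lra.
  apply Rmult_le_compat_r; [lra|].
  assert (Hms : Rabs (mu * s) <= 2 * Rabs mu).
  { rewrite Rabs_mult, Rmult_comm. apply Rmult_le_compat_r; [apply Rabs_pos | apply Rabs_le; lra]. }
  pose proof (pow2_ge_0 eta). pose proof (pow2_ge_0 mu).
  apply Rabs_le_between in Hms as [Hms1 Hms2].
  assert (kappa * (mu * s) <= kappa * (2 * Rabs mu)) by (apply Rmult_le_compat_l; lra).
  assert (kappa * - (2 * Rabs mu) <= kappa * (mu * s)) by (apply Rmult_le_compat_l; lra).
  assert (0 <= 2 * eta ^ 2 * D <= 2 * eta ^ 2) by (split; nra).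
  assert (0 <= kappa * (mu ^ 2 * D) <= kappa * mu ^ 2)
    by (split; [apply Rmult_le_pos; nra | apply Rmult_le_compat_l; nra]).
  apply Rabs_le_between. split; nra.
Qed.

Lemma perturbed_coef_bounds (kappa g eta mu D l : R) :
  0 < kappa -> -1 < g < 1 -> l = 1 \/ l = -1 -> 0 < D <= 1 ->
  let C := 2 * eta ^ 2 + kappa * (4 * Rabs mu + mu ^ 2) + 1 in
  let Amin := kappa * Rmin ((g + 1) ^ 2) ((g - 1) ^ 2) in
  C * D <= Amin / 2 ->
  Amin / 2 <= kappa * (g + l) ^ 2 <= 4 * kappa + C /\
  Amin / 2 <= 2 * eta ^ 2 * (D * D) + kappa * (mu * D + g + l) ^ 2 <= 4 * kappa + C /\
  Rabs (kappa * (g + l) ^ 2 - (2 * eta ^ 2 * (D * D) + kappa * (mu * D + g + l) ^ 2)) <= C * D.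
Proof.
  intros Hk Hg Hl HD C Amin HCD.
  assert (Hs : -2 <= g + l <= 2) by (destruct Hl as [-> | ->]; lra).
  pose proof (coef_perturbation_le kappa eta mu (g + l) D ltac:(lra) Hs ltac:(lra)) as Hpert.
  replace (mu * D + (g + l)) with (mu * D + g + l) in Hpert by ring.
  rewrite Rabs_minus_sym in Hpert.
  assert (Amin <= kappa * (g + l) ^ 2 <= 4 * kappa).
  { split; [apply Rmult_le_compat_l; [lra | apply Rmin_sqr_shift_le, Hl] |].
    assert ((g + l) ^ 2 <= 4) by nra. nra. }
  assert (HE : 0 <= 2 * eta ^ 2 + kappa * (4 * Rabs mu + mu ^ 2))
    by (pose proof (pow2_ge_0 eta); pose proof (pow2_ge_0 mu); pose proof (Rabs_pos mu); nra).
  assert (HCD1 : (C - 1) * D <= C) by (unfold C; nra).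
  apply Rabs_le_between in Hpert as Hb.
  repeat split; unfold C in *; lra.
Qed.

Lemma lich_perturbation (kappa q g t eta mu : R) (a : R -> R) (psi psihat : R -> R -> R) :
  0 < kappa -> 1 < q -> -1 < g < 1 -> Rabs t <> 1 -> (forall d, 0 < d -> 0 < a d) ->
  (forall d, 0 < d -> lich_solution (a d) q
     (fun l => 2 * eta ^ 2 * Rpower d (- 2 * q) + kappa * (mu * Rpower d (- q) + g + l) ^ 2)
     (fun l => kappa * (t + l) ^ 2) (psi d)) ->
  (forall d, 0 < d -> lich_solution (a d) q
     (fun l => kappa * (g + l) ^ 2) (fun l => kappa * (t + l) ^ 2) (psihat d)) ->
  exists c, 0 < c /\ exists D, forall d, D < d ->
    forall x, Rabs (psihat d x - psi d x) < c * Rpower d (- q).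
Proof.
  intros Hk Hq Hg Ht Ha Hpsi Hpsihat.
  set (C := 2 * eta ^ 2 + kappa * (4 * Rabs mu + mu ^ 2) + 1).
  set (Amin := kappa * Rmin ((g + 1) ^ 2) ((g - 1) ^ 2)).
  set (Bmin := kappa * Rmin ((t + 1) ^ 2) ((t - 1) ^ 2)).
  set (K := 4 * kappa + C).
  set (M := Rmax 1 (K / Bmin)).
  assert (HC : 0 < C).
  { pose proof (Rabs_pos mu). pose proof (pow2_ge_0 eta). pose proof (pow2_ge_0 mu). unfold C. nra. }
  assert (HAmin : 0 < Amin) by (apply Rmult_lt_0_compat; [lra | apply Rmin_glb_lt; nra]).
  assert (HBmin : 0 < Bmin).
  { assert (t + 1 <> 0) by (intros E; apply Ht; replace t with (- 1) by lra; rewrite Rabs_left; lra).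
    assert (t - 1 <> 0) by (intros E; apply Ht; replace t with 1 by lra; apply Rabs_R1).
    apply Rmult_lt_0_compat; [lra | apply Rmin_glb_lt; apply pow2_gt_0; assumption]. }
  assert (HM : 1 <= M) by apply Rmax_l.
  assert (HMC : 0 < M * C / (Amin / 2)) by (apply Rdiv_lt_0_compat; nra).
  exists (M * C / (Amin / 2) + 1). split; [lra|].
  exists (Rmax 1 (2 * C / Amin)). intros d Hd x.
  pose proof (Rmax_l 1 (2 * C / Amin)). pose proof (Rmax_r 1 (2 * C / Amin)).
  set (D := Rpower d (- q)).
  assert (HD : 0 < D <= 1).
  { split; [apply Rpower_pos|]. apply Rle_trans with (/ d); [apply Rpower_opp_le_inv; lra|].
    rewrite <- Rinv_1. apply Rinv_le_contravar; lra. }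
  (* Past [d = 2 C / Amin] the perturbed coefficient of [psi^(-q-1)] stays above [Amin / 2]. *)
  assert (HCD : C * D <= Amin / 2).
  { assert (D < Amin / (2 * C)).
    { apply Rle_lt_trans with (/ d); [apply Rpower_opp_le_inv; lra|].
      replace (Amin / (2 * C)) with (/ (2 * C / Amin)) by (field; lra).
      apply Rinv_lt_contravar; [apply Rmult_lt_0_compat; [apply Rdiv_lt_0_compat|]; lra | lra]. }
    apply (Rmult_lt_compat_l C) in H1; [|exact HC].
    replace (C * (Amin / (2 * C))) with (Amin / 2) in H1 by (field; lra). lra. }
  assert (HD2 : Rpower d (- 2 * q) = D * D) by (unfold D; rewrite <- Rpower_plus; f_equal; ring).
  assert (Hclose := lich_solutions_close (a d) q _ _ _ (psihat d) (psi d) (Amin / 2) K Bmin (C * D)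
    (Ha d ltac:(lra)) Hq (Hpsihat d ltac:(lra)) (Hpsi d ltac:(lra)) ltac:(lra) HBmin ltac:(nra)).
  apply Rle_lt_trans with (M * (C * D) / (Amin / 2)).
  - apply Hclose. intros l Hl. rewrite HD2. fold D.
    pose proof (perturbed_coef_bounds kappa g eta mu D l Hk Hg Hl HD HCD).
    assert (Bmin <= kappa * (t + l) ^ 2) by (apply Rmult_le_compat_l; [lra | apply Rmin_sqr_shift_le, Hl]).
    unfold K. repeat split; unfold C, Amin in *; lra.
  - replace (M * (C * D) / (Amin / 2)) with (M * C / (Amin / 2) * D) by (field; lra).
    rewrite Rmult_plus_distr_r. lra.
Qed.

Lemma W2inf_pos_solution_ext (a : R) (F G : R -> R -> R) (psi : R -> R) :
  W2inf_pos_solution a F psi -> (forall x p, F x p = G x p) -> W2inf_pos_solution a G psi.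
Proof.
  intros [Hper [Hpos [dpsi [Hd Hd2]]]] HFG.
  repeat split; auto. exists dpsi. split; [exact Hd|].
  intros x Hx. destruct (Hd2 x Hx) as [d2 [? ?]]. exists d2. rewrite <- HFG. auto.
Qed.

Lemma is_lim_of_close (f g : R -> R) (c q D0 : R) (l : Rbar) :
  1 <= q -> (forall d, D0 < d -> Rabs (g d - f d) < c * Rpower d (- q)) ->
  is_lim f p_infty l -> is_lim g p_infty l.
Proof.
  intros Hq Hb Hf.
  assert (H0 : is_lim (fun d => g d - f d) p_infty 0).
  { apply is_lim_spec. intros eps. pose proof (cond_pos eps).
    exists (Rmax D0 (Rmax 1 (Rabs c / eps))). intros x Hx.
    pose proof (Rmax_l D0 (Rmax 1 (Rabs c / eps))). pose proof (Rmax_r D0 (Rmax 1 (Rabs c / eps))).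
    pose proof (Rmax_l 1 (Rabs c / eps)). pose proof (Rmax_r 1 (Rabs c / eps)).
    pose proof (Rle_abs c).
    rewrite Rminus_0_r.
    apply Rlt_le_trans with (c * Rpower x (- q)); [apply Hb; lra|].
    apply Rle_trans with (Rabs c * / x).
    { apply Rle_trans with (Rabs c * Rpower x (- q)).
      - apply Rmult_le_compat_r; [left; apply Rpower_pos | exact H4].
      - apply Rmult_le_compat_l; [apply Rabs_pos | apply Rpower_opp_le_inv; lra]. }
    assert (Rabs c <= eps * x).
    { apply Rle_trans with (eps * (Rabs c / eps)); [right; field; lra|].
      apply Rmult_le_compat_l; lra. }
    apply Rmult_le_reg_r with x; [lra|]. field_simplify; lra. }
  apply is_lim_ext with (fun d => f d + (g d - f d)); [intros; ring|].
  eapply is_lim_plus; [exact Hf | exact H0 |].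
  destruct l; simpl; try reflexivity. unfold is_Rbar_plus. simpl. rewrite Rplus_0_r. reflexivity.
Qed.

Theorem proposition3p26
  (n : nat) (Hn : (3 <= n)%nat)
  (N : R -> R) (HNper : periodic2pi N) (HNsm : smooth N) (HNpos : forall x, 0 < N x)
  (t eta mu : R) (Ht : Rabs t <> 1)
  (psi psihat : R -> R -> R)
  (Hpsi : forall d, 0 < d ->
     let q := 2 * INR n / (INR n - 2) in
     let kappa := (INR n - 1) / INR n in
     W2inf_pos_solution (2 * kappa * q * Rpower d (- (2 * q / INR n)))
       (fun x p =>
          - 2 * eta ^ 2 * Rpower d (- 2 * q) * Rpower p (- q - 1)
          - kappa * (mu * Rpower d (- q) + gammaN N + lam x) ^ 2 * Rpower p (- q - 1)
          + kappa * (t + lam x) ^ 2 * Rpower p (q - 1))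
       (psi d))
  (Hpsihat : forall d, 0 < d ->
     let q := 2 * INR n / (INR n - 2) in
     let kappa := (INR n - 1) / INR n in
     W2inf_pos_solution (2 * kappa * q * Rpower d (- (2 * q / INR n)))
       (fun x p =>
          - kappa * (gammaN N + lam x) ^ 2 * Rpower p (- q - 1)
          + kappa * (t + lam x) ^ 2 * Rpower p (q - 1))
       (psihat d)) :
  let q := 2 * INR n / (INR n - 2) in
  (exists c : R, 0 < c /\ exists D : R, forall d, D < d ->
      forall x, Rabs (psihat d x - psi d x) < c * Rpower d (- q))
  /\ (forall l : Rbar,
        is_lim (fun d => psi d 0) p_infty l <-> is_lim (fun d => psihat d 0) p_infty l).
Proof.
  intros q. set (kappa := (INR n - 1) / INR n).
  assert (Hn3 : 3 <= INR n) by (apply (le_INR 3) in Hn; simpl in Hn; lra).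
  assert (Hq : 1 < q) by (apply Rminus_lt_0;
    replace (q - 1) with ((INR n + 2) / (INR n - 2)) by (unfold q; field; lra);
    apply Rdiv_lt_0_compat; lra).
  assert (Hk : 0 < kappa) by (apply Rdiv_lt_0_compat; lra).
  assert (Hg : -1 < gammaN N < 1).
  { apply gammaN_bounds; [| exact HNpos].
    intros x. apply (@ex_derive_continuous R_AbsRing R_NormedModule), (HNsm 1%nat x). }
  assert (Hclose : exists c, 0 < c /\ exists D, forall d, D < d ->
            forall x, Rabs (psihat d x - psi d x) < c * Rpower d (- q)).
  { apply (lich_perturbation kappa q (gammaN N) t eta mu
             (fun d => 2 * kappa * q * Rpower d (- (2 * q / INR n)))); auto.
    - intros d _. apply Rmult_lt_0_compat; [nra | apply Rpower_pos].
    - intros d Hd. apply (W2inf_pos_solution_ext _ _ _ _ (Hpsi d Hd)).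
      intros x p. unfold lich_rhs, q, kappa. ring.
    - intros d Hd. apply (W2inf_pos_solution_ext _ _ _ _ (Hpsihat d Hd)).
      intros x p. unfold lich_rhs, q, kappa. ring. }
  split; [exact Hclose|].
  destruct Hclose as [c [_ [D HD]]].
  intros l. split; intros Hlim.
  - exact (is_lim_of_close _ _ c q D l (Rlt_le _ _ Hq) (fun d Hd => HD d Hd 0) Hlim).
  - refine (is_lim_of_close _ _ c q D l (Rlt_le _ _ Hq) _ Hlim).
    intros d Hd. rewrite Rabs_minus_sym. apply HD, Hd.
Qed.
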